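(* Let $\mathcal{X}$ be a finite set with $|\mathcal{X}|=n$, $\pi$ a probability mass function on $\mathcal{X}$ with full support, and $P$ a $\pi$-reversible transition matrix. Let a group $\mathcal{G}$ act on $\mathcal{X}$ with $k<n$ orbits $(\mathcal{O}_i)_{i=1}^k$, and let $G$ be the Gibbs orbit kernel. Then $\mathrm{spec}(GPG)=\mathrm{spec}(\overline{P})\cup\{0\}$.
   Context: $G(x,y)=\pi(y)/\pi(\mathcal{O}(x))$ for $y$ in the orbit $\mathcal{O}(x)$ of $x$, else $0$, with $\pi(A)=\sum_{z\in A}\pi(z)$. The projection chain is $\overline{P}(i,j)=\frac{1}{\pi(\mathcal{O}_i)}\sum_{x\in\mathcal{O}_i,y\in\mathcal{O}_j}\pi(x)P(x,y)$ on $\{1,\dots,k\}$. $\mathrm{spec}(K)$ denotes the set of distinct eigenvalues of $K$. *)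

From HB Require Import structures.
From mathcomp Require Import all_boot all_order all_algebra all_fingroup.
Set Implicit Arguments. Unset Strict Implicit. Unset Printing Implicit Defensive.
Import GRing.Theory Num.Theory.
Local Open Scope ring_scope.

Definition orbits_of (gT : finGroupType) (H : {group gT}) (n : nat)
  (to : action H 'I_n) : {set {set 'I_n}} :=
  [set orbit to H x | x in [set: 'I_n]].

Definition orb (gT : finGroupType) (H : {group gT}) (n : nat)
  (to : action H 'I_n) (i : 'I_#|orbits_of to|) : {set 'I_n} :=
  enum_val i.

Definition massof (R : numFieldType) (n : nat) (pi : 'I_n -> R) (A : {set 'I_n}) : R :=
  \sum_(z in A) pi z.

Definition gibbs_orbit_kernel (R : numFieldType) (gT : finGroupType) (H : {group gT})
  (n : nat) (to : action H 'I_n) (pi : 'I_n -> R) : 'M[R]_n :=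
  \matrix_(x, y) (if y \in orbit to H x then pi y / massof pi (orbit to H x) else 0).

Definition projection_chain (R : numFieldType) (gT : finGroupType) (H : {group gT})
  (n : nat) (to : action H 'I_n) (pi : 'I_n -> R) (P : 'M[R]_n)
  : 'M[R]_#|orbits_of to| :=
  \matrix_(i, j) ((massof pi (orb i))^-1 *
     \sum_(x in orb i) \sum_(y in orb j) pi x * P x y).

Definition spec (F : fieldType) (m : nat) (K : 'M[F]_m) : F -> Prop :=
  fun a => eigenvalue K a.

From HB Require Import structures.
From mathcomp Require Import all_boot all_order all_algebra all_fingroup.
From mathcomp Require Import reals.
Set Implicit Arguments. Unset Strict Implicit. Unset Printing Implicit Defensive.
Import Order.TTheory GRing.Theory Num.Theory.
Local Open Scope ring_scope.

(* The Gibbs orbit kernel factors as G = U V, where U is the n x k incidence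
   matrix of the orbits and V the k x n matrix whose i-th row is the
   conditional law pi( . | O_i); since V U = 1, the projection chain is
   Pbar = V P U and GPG = U Pbar V.  The nonzero eigenvalues of
   U (Pbar V) are those of (Pbar V) U = Pbar, and 0 is an eigenvalue of GPG
   because its rank is at most k < n. *)

Section SandwichEigenvalues.
Variable F : fieldType.

Lemma eigenvalue_mulmxC m k (A : 'M[F]_(m, k)) (B : 'M_(k, m)) a :
  a != 0 -> eigenvalue (A *m B) a = eigenvalue (B *m A) a.
Proof.
move=> a_neq0.
suff swap p q (C : 'M[F]_(p, q)) D :
    eigenvalue (C *m D) a -> eigenvalue (D *m C) a.
  by apply/idP/idP; apply: swap.
case/eigenvalueP => v vCD v_neq0; apply/eigenvalueP; exists (v *m C).
  by rewrite mulmxA -(mulmxA v) vCD scalemxAl.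
apply: contraNneq v_neq0 => vC0; move/eqP: vCD.
by rewrite mulmxA vC0 mul0mx eq_sym scaler_eq0 (negbTE a_neq0).
Qed.

Lemma eigenvalue0 n (A : 'M[F]_n) : eigenvalue A 0 = ~~ row_free A.
Proof. by rewrite /eigenvalue /eigenspace raddf0 subr0 kermx_eq0. Qed.

Lemma eigenvalue_sandwich n k (U : 'M[F]_(n, k)) (V : 'M_(k, n)) (B : 'M_k) a :
  V *m U = 1%:M -> (k < n)%N ->
  eigenvalue (U *m B *m V) a = eigenvalue B a || (a == 0).
Proof.
move=> VU k_lt_n; have [->|a_neq0] := eqVneq a 0.
  rewrite orbT eigenvalue0; apply: contraTN k_lt_n => /eqP <-.
  by rewrite -leqNgt -mulmxA (leq_trans (mxrankM_maxl _ _)) ?rank_leq_col.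
by rewrite orbF -mulmxA eigenvalue_mulmxC // -mulmxA VU mulmx1.
Qed.

End SandwichEigenvalues.

Section OrbitIndex.
Variables (gT : finGroupType) (H : {group gT}) (n : nat) (to : action H 'I_n).
Local Notation k := #|orbits_of to|.

Lemma mem_orbits_of x : orbit to H x \in orbits_of to.
Proof. by apply/imsetP; exists x. Qed.

Definition orb_index x : 'I_k := enum_rank_in (mem_orbits_of x) (orbit to H x).

Lemma orb_orb_index x : orb (orb_index x) = orbit to H x.
Proof. by rewrite /orb enum_rankK_in ?mem_orbits_of. Qed.

Lemma orb_neq0 (i : 'I_k) : orb i != set0.
Proof.
apply/set0Pn; have /imsetP [z _ iz] := enum_valP i.
by exists z; rewrite /orb iz orbit_refl.
Qed.

Lemma mem_orb x (i : 'I_k) : (x \in orb i) = (orb_index x == i).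
Proof.
apply/idP/eqP => [x_i|<-]; last by rewrite orb_orb_index orbit_refl.
have /imsetP [z _ iz] := enum_valP i; rewrite -/(orb i) in iz.
apply: enum_val_inj; change (orb (orb_index x) = orb i).
rewrite orb_orb_index iz.
by move: x_i; rewrite iz => /orbit_in_eqP ->.
Qed.

End OrbitIndex.

Section OrbitFactorization.
Variables (R : numFieldType) (gT : finGroupType) (H : {group gT}).
Variables (n : nat) (to : action H 'I_n) (pi : 'I_n -> R).
Local Notation k := #|orbits_of to|.

Lemma massof_gt0 (A : {set 'I_n}) :
  (forall x, 0 < pi x) -> A != set0 -> 0 < massof pi A.
Proof.
move=> pi_gt0 /set0Pn [x xA]; rewrite /massof (bigD1 x) //=.
by rewrite ltr_wpDr // sumr_ge0 // => y _; apply: ltW.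
Qed.

Definition orbit_incidence : 'M[R]_(n, k) := \matrix_(x, i) (x \in orb i)%:R.

Definition orbit_conditional : 'M[R]_(k, n) :=
  \matrix_(i, y) (if y \in orb i then pi y / massof pi (orb i) else 0).

Lemma gibbs_orbit_kernelE :
  gibbs_orbit_kernel to pi = orbit_incidence *m orbit_conditional.
Proof.
apply/matrixP => x y; rewrite !mxE (bigD1 (orb_index to x)) //= big1.
  by rewrite !mxE mem_orb eqxx mul1r addr0 orb_orb_index.
by move=> i; rewrite !mxE mem_orb eq_sym => /negbTE ->; rewrite mul0r.
Qed.

Lemma mulmx_conditional_incidence :
  (forall x, 0 < pi x) -> orbit_conditional *m orbit_incidence = 1%:M.
Proof.
move=> pi_gt0; apply/matrixP => i j; rewrite !mxE.
transitivity (\sum_(y in orb i) pi y / massof pi (orb i) * (i == j)%:R).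
  rewrite [RHS]big_mkcond; apply: eq_bigr => y _.
  by rewrite !mxE !mem_orb; case: eqP => [->|]; rewrite ?mul0r.
rewrite -!big_distrl /= mulfV ?mul1r //.
by rewrite gt_eqF // massof_gt0 ?orb_neq0.
Qed.

Lemma projection_chainE (P : 'M[R]_n) :
  projection_chain to pi P = orbit_conditional *m P *m orbit_incidence.
Proof.
apply/matrixP => i j; rewrite !mxE.
under [RHS]eq_bigr do rewrite mxE big_distrl /=.
rewrite [RHS]exchange_big mulr_sumr [LHS]big_mkcond; apply: eq_bigr => x _ /=.
rewrite mxE; case: ifP => _; last by rewrite big1 // => y _; rewrite !mul0r.
rewrite mulr_sumr [LHS]big_mkcond; apply: eq_bigr => y _ /=; rewrite mxE.
by case: ifP; rewrite ?mulr1 ?mulr0 // mulrCA mulrA.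
Qed.

End OrbitFactorization.

Theorem proposition6p2 (R : realType) (n : nat) (pi : 'I_n -> R) (P : 'M[R]_n)
  (gT : finGroupType) (H : {group gT}) (to : action H 'I_n) :
  (forall x, 0 < pi x) ->
  \sum_(x < n) pi x = 1 ->
  (forall x y, 0 <= P x y) ->
  (forall x, \sum_(y < n) P x y = 1) ->
  (forall x y, pi x * P x y = pi y * P y x) ->
  (#|orbits_of to| < n)%N ->
  forall a : R,
    spec (gibbs_orbit_kernel to pi *m P *m gibbs_orbit_kernel to pi) a <->
    (spec (projection_chain to pi P) a \/ a = 0).
Proof.
move=> pi_gt0 _ _ _ _ k_lt_n a; rewrite /spec gibbs_orbit_kernelE projection_chainE.
set U := orbit_incidence _ _; set V := orbit_conditional _ _.
have -> : U *m V *m P *m (U *m V) = U *m (V *m P *m U) *m V by rewrite !mulmxA.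
rewrite eigenvalue_sandwich ?(mulmx_conditional_incidence to pi_gt0) //.
by split => [/orP [|/eqP]|[|->]]; [left | right | move=> -> | rewrite eqxx orbT].
Qed.
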